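(* Let $\Gamma$ be the triangle graph (three vertices, three edges $e_1,e_2,e_3$) with magnetic field $1$ at one vertex and $0$ at the other two, i.e. vertex weights $1,0,0$, so that its $\mathbf{V}$-polynomial is $$x_1\big(x_0^2+x_0(t_{e_1}+t_{e_2}+t_{e_3})+t_{e_1}(t_{e_2}+t_{e_3}+t_{e_2}t_{e_3})+t_{e_2}t_{e_3}\big)$$ in the variables $x_0,x_1,t_{e_1},t_{e_2},t_{e_3}$. Then the affine hypersurface in $\mathbb{A}^5$ defined by the vanishing of this polynomial is polynomially countable.
   Context: For a graph $\Gamma$ with vertex weight $\omega:V(\Gamma)\to S$, the $\mathbf{V}$-polynomial is $\mathbf{V}_\Gamma(t,x)=\sum_{A\subseteq E(\Gamma)}\prod_{j}x_{s_j}\prod_{e\in A}t_e$, where the product over $j$ runs over the connected components of the spanning subgraph with edge set $A$ and $s_j$ is the sum of the weights of the vertices of the $j$-th component. A hypersurface defined by a polynomial with integer coefficients is polynomially countable if for every prime $p$ and every power $q=p^r$, the number $N(q)$ of its $\mathbb{F}_q$-points is given by a polynomial in $q$ with integer coefficients. *)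

From mathcomp Require Import all_boot all_algebra all_field.
Set Implicit Arguments. Unset Strict Implicit. Unset Printing Implicit Defensive.
Import GRing.Theory.
Local Open Scope ring_scope.

Definition Vtri (R : comNzRingType) (x0 x1 t1 t2 t3 : R) : R :=
  x1 * (x0 ^+ 2 + x0 * (t1 + t2 + t3) + t1 * (t2 + t3 + t2 * t3) + t2 * t3).

Definition Vtri_count (F : finFieldType) : nat :=
  #|[set v : F * F * F * F * F |
      Vtri v.1.1.1.1 v.1.1.1.2 v.1.1.2 v.1.2 v.2 == 0]|.

From mathcomp Require Import all_boot all_algebra all_field.
From mathcomp Require Import ring.
Import GRing.Theory.

(** Count the zeros over F_q fibre by fibre. Over x1 = 0 every point is a zero:
    q^4 points. For x1 <> 0 the polynomial is, up to the unit x1, affine in t1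
    with slope x0 + c, c = t2 + t3 + t2 t3, and constant term (x0 + t2)(x0 + t3).
    Each of the q - 1 values x0 <> -c gives exactly one t1; at x0 = -c the
    constant term becomes t2(1 + t2) t3(1 + t3), and all q values of t1 are zeros
    exactly when this vanishes. As t(1 + t) has exactly two roots in any field,
    that happens for 4q - 4 pairs (t2, t3). Altogether
    q^4 + (q - 1)(q^3 - q^2 + 4q^2 - 4q) = 2q^4 + 2q^3 - 7q^2 + 4q. *)

Section FinTypeCounting.
Variable T : finType.

Lemma sum_nat_boolE (P : pred T) : \sum_(t : T) (P t : nat) = #|P|.
Proof. by rewrite -sum1_card [RHS]big_mkcond. Qed.

Lemma sum_if_eq (c : T) (m : T -> nat) (n : nat) :
  \sum_(t : T) (if t == c then m t else n) = m c + #|T|.-1 * n.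
Proof.
rewrite (bigD1 c) //= eqxx -(cardC1 c) -sum_nat_const.
by congr (_ + _); apply: eq_big => [t|t /negbTE ->]; rewrite ?inE.
Qed.

Lemma sum_if_pred (P : pred T) (m n : nat) :
  \sum_(t : T) (if P t then m else n) = #|P| * m + #|predC P| * n.
Proof.
rewrite -!sum_nat_const [X in X + _]big_mkcond [X in _ + X]big_mkcond -big_split.
by apply: eq_bigr => t _; rewrite !inE unfold_in; case: (P t); rewrite /= ?addn0.
Qed.

End FinTypeCounting.

Lemma sum_mul_eq0 (T : finType) (R : idomainType) (f g : T -> R) :
  \sum_(x : T) \sum_(y : T) (f x * g y == 0)%R =
  #|[pred x | f x == 0%R]| * #|T| + #|[pred x | f x != 0%R]| * #|[pred y | g y == 0%R]|.
Proof.
have inner x : \sum_(y : T) (f x * g y == 0)%R =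
    if f x == 0%R then #|T| else #|[pred y | g y == 0%R]|.
  under eq_bigr do rewrite mulf_eq0.
  by case: eqP => _; rewrite ?sum_nat_const ?muln1 ?sum_nat_boolE.
under eq_bigr do rewrite inner.
exact: (@sum_if_pred _ [pred x | f x == 0%R]).
Qed.

Section FiniteFieldCounting.
Variable F : finFieldType.
Local Notation q := #|F|.

Lemma sum_affine_eq0 (a b : F) :
  \sum_(t : F) (a * t + b == 0)%R = if a == 0%R then q * (b == 0%R) else 1.
Proof.
have [->|a_neq0] := eqVneq a 0%R.
  by under eq_bigr do rewrite mul0r add0r; rewrite sum_nat_const.
rewrite sum_nat_boolE -(card1 (- b / a)%R); apply: eq_card => t.
rewrite unfold_in inE /= addr_eq0; apply/eqP/eqP => [<-|->].
  by rewrite mulrC mulKf.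
by rewrite mulrC divfK.
Qed.

Lemma card_roots2 (a b : F) :
  a != b -> #|[pred t : F | (t - a) * (t - b) == 0]%R| = 2.
Proof.
move=> neq_ab; rewrite -[RHS]/(true.+1) -neq_ab -card2; apply: eq_card => t.
by rewrite unfold_in !inE /= mulf_eq0 !subr_eq0.
Qed.

End FiniteFieldCounting.

Section TriangleCount.
Variable F : finFieldType.
Local Notation q := #|F|.

Lemma Vtri_count_nested : Vtri_count F =
  \sum_(x1 : F) \sum_(t2 : F) \sum_(t3 : F) \sum_(x0 : F) \sum_(t1 : F)
    (Vtri x0 x1 t1 t2 t3 == 0)%R.
Proof.
rewrite !pair_big /= /Vtri_count -sum1_card big_mkcond /=.
pose shuffle (v : F * F * F * F * F) : F * F * F * F * F :=
  let: (x1, t2, t3, x0, t1) := v in (x0, x1, t1, t2, t3).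
pose unshuffle (v : F * F * F * F * F) : F * F * F * F * F :=
  let: (x0, x1, t1, t2, t3) := v in (x1, t2, t3, x0, t1).
rewrite (reindex shuffle); last by exists unshuffle => [] [[[[? ?] ?] ?] ?].
by apply: eq_bigr => [] [[[[x1 t2] t3] x0] t1] _; rewrite inE.
Qed.

Lemma Vtri_affine_t1 (x0 x1 t1 t2 t3 : F) : Vtri x0 x1 t1 t2 t3 =
  (x1 * ((x0 + (t2 + t3 + t2 * t3)) * t1 + (x0 + t2) * (x0 + t3)))%R.
Proof. by rewrite /Vtri; ring. Qed.

Lemma sum_Vtri_t1 (x0 x1 t2 t3 : F) : x1 != 0%R ->
  \sum_(t1 : F) (Vtri x0 x1 t1 t2 t3 == 0)%R =
  if x0 == (- (t2 + t3 + t2 * t3))%R then q * ((x0 + t2) * (x0 + t3) == 0)%R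
  else 1.
Proof.
move=> x1_neq0; under eq_bigr do rewrite Vtri_affine_t1 mulf_eq0 (negbTE x1_neq0).
by rewrite sum_affine_eq0 addr_eq0.
Qed.

Lemma sum_Vtri_x0_t1 (x1 t2 t3 : F) : x1 != 0%R ->
  \sum_(x0 : F) \sum_(t1 : F) (Vtri x0 x1 t1 t2 t3 == 0)%R =
  q * (t2 * (t2 + 1) * (t3 * (t3 + 1)) == 0)%R + q.-1.
Proof.
move=> x1_neq0; under eq_bigr do rewrite sum_Vtri_t1 //.
rewrite sum_if_eq muln1; congr (q * (_ == _) + _); ring.
Qed.

Lemma card_mulrD1_eq0 : #|[pred t : F | t * (t + 1) == 0]%R| = 2.
Proof.
rewrite -(@card_roots2 F 0%R (-1)%R); last by rewrite eq_sym oppr_eq0 oner_eq0.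
by apply: eq_card => t; rewrite !inE subr0 opprK.
Qed.

Lemma card_mulrD1_neq0 : #|[pred t : F | t * (t + 1) != 0]%R| = q - 2.
Proof.
rewrite -(cardC [pred t : F | t * (t + 1) == 0]%R) card_mulrD1_eq0 addKn.
by apply: eq_card => t; rewrite !inE.
Qed.

Lemma sum_Vtri_fiber (x1 : F) :
  \sum_(t2 : F) \sum_(t3 : F) \sum_(x0 : F) \sum_(t1 : F)
    (Vtri x0 x1 t1 t2 t3 == 0)%R =
  if x1 == 0%R then q ^ 4 else q * (2 * q + (q - 2) * 2) + q * (q * q.-1).
Proof.
have [->|x1_neq0] := eqVneq x1 0%R.
  have Vtri0 x0 t1 t2 t3 : Vtri x0 0 t1 t2 t3 = 0%R by rewrite /Vtri mul0r.
  transitivity (\sum_(t2 : F) \sum_(t3 : F) \sum_(x0 : F) \sum_(t1 : F) 1).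
    by do 4!(apply: eq_bigr => ? _); rewrite Vtri0 eqxx.
  by rewrite !sum_nat_const !muln1.
under eq_bigr do under eq_bigr do rewrite sum_Vtri_x0_t1 //.
under eq_bigr do rewrite big_split -big_distrr /= sum_nat_const.
rewrite big_split -big_distrr /= sum_nat_const.
rewrite (@sum_mul_eq0 _ _ (fun t => t * (t + 1))%R (fun t => t * (t + 1))%R).
by rewrite card_mulrD1_eq0 card_mulrD1_neq0.
Qed.

Lemma Vtri_count_eq :
  Vtri_count F = q ^ 4 + q.-1 * (q * (2 * q + (q - 2) * 2) + q * (q * q.-1)).
Proof.
rewrite Vtri_count_nested.
by under eq_bigr do rewrite sum_Vtri_fiber; rewrite sum_if_eq.
Qed.

End TriangleCount.

Local Open Scope ring_scope.

Theorem theorem3p4 :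
  exists P : {poly int}, forall F : finFieldType,
    (Vtri_count F)%:Z = P.[(#|F|)%:Z].
Proof.
exists (2%:P * 'X^4 + 2%:P * 'X^3 - 7%:P * 'X^2 + 4%:P * 'X) => F.
rewrite Vtri_count_eq !hornerE.
case: #|F| (card_finNzRing_gt1 F) => [|[|k]] // _.
rewrite !subSS subn0 /= !(PoszD, PoszM) -!natz.
ring.
Qed.
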